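(* Let $\alpha=(\alpha_n)_{n\ge1}$ be a non-negative non-increasing null sequence with $\alpha_1\le1$ and let $\omega\in(0,1)$. Suppose $C>0$ is a constant such that $$K^{(\omega)}_{n+j}(\alpha)\ge C\Big(\sum_{i=0}^nK^{(\omega)}_i(\alpha)\Big)^2$$ for all $j\in\mathbb N$ and $n\in\mathbb N\cup\{0\}$. Then $\langle\alpha\rangle$ is a stable Calkin space.
   Context: $K^{(\omega)}_n(\alpha)=|\{m:\omega^{n+1}<\alpha_m\le\omega^n\}|$ for $n\ge0$. $c_0$: complex null sequences; $\beta^\star$: non-increasing rearrangement of $(|\beta_n|)$. A Calkin space is a linear subspace $\mathfrak i\subseteq c_0$ such that $\gamma\in\mathfrak i,\beta\in c_0,\beta^\star\le\gamma^\star$ imply $\beta\in\mathfrak i$; $\langle\alpha\rangle$ is the smallest Calkin space containing $\alpha$. For $\beta,\gamma\in c_0$, $\beta\otimes\gamma$ is the non-increasing rearrangement with multiplicities of $(|\beta_i\gamma_j|)_{i,j}$; $\mathfrak i$ is stable if the smallest Calkin space containing all $\beta\otimes\gamma$, $\beta,\gamma\in\mathfrak i$, equals $\mathfrak i$. *)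

From HB Require Import structures.
From mathcomp Require Import all_boot all_order all_algebra.
From mathcomp Require Import all_classical all_reals.
From mathcomp Require Import topology normedtype sequences.
From mathcomp Require Import complex finmap.
Set Implicit Arguments.
Unset Strict Implicit.
Unset Printing Implicit Defensive.
Import Order.TTheory GRing.Theory Num.Theory numFieldNormedType.Exports.
Local Open Scope classical_set_scope.
Local Open Scope ring_scope.

Section CalkinDefs.
Variable R : realType.

Definition modc (z : R[i]) : R := Normc.normc z.

(* null sequences (c_0) of complex numbers, indexed from 0 *)
Definition c0 (b : nat -> R[i]) : Prop :=
  (fun n => modc (b n)) @ \oo --> (0 : R).

(* non-increasing rearrangement (with multiplicities) of a family f of
   non-negative reals indexed by I (min-max formula):
   rearr f n = inf over sets F of at most n indices of sup_{i notin F} f i.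
   Index n = 0 is the first (largest) term. *)
Definition rearr (I : eqType) (f : I -> R) (n : nat) : R :=
  inf [set sup [set f i | i in [set i | i \notin s]] |
        s in [set s : seq I | (size s <= n)%N]].

Definition star (b : nat -> R[i]) : nat -> R :=
  rearr (fun k : nat => modc (b k)).

Definition calkin (I : set (nat -> R[i])) : Prop :=
  [/\ I `<=` c0,
      I (fun _ => 0),
      (forall b g, I b -> I g -> I (fun n => b n + g n)),
      (forall (c : R[i]) b, I b -> I (fun n => c * b n)) &
      (forall g b, I g -> c0 b -> (forall n, star b n <= star g n) -> I b)].

Definition calkin_gen (S : set (nat -> R[i])) : set (nat -> R[i]) :=
  [set b | forall I, calkin I -> S `<=` I -> I b].

Definition calkin_span (a : nat -> R[i]) := calkin_gen [set a].

Definition tensor (b g : nat -> R[i]) : nat -> R[i] :=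
  fun n => ((rearr (fun p : nat * nat => modc (b p.1 * g p.2)) n)%:C)%C.

Definition stable (I : set (nat -> R[i])) : Prop :=
  calkin_gen [set t | exists b g, [/\ I b, I g & t = tensor b g]] = I.

(* K^{(omega)}_n(alpha) = |{m : omega^{n+1} < alpha_m <= omega^n}|
   (cardinality of a set of indices; this set is finite for the sequences
   considered, fset_set returns the empty set otherwise) *)
Definition Kw (w : R) (a : nat -> R) (n : nat) : nat :=
  (#|` fset_set [set m | w ^+ n.+1 < a m <= w ^+ n]|)%fset.

End CalkinDefs.

(* The span <alpha> consists of the null sequences b with
   b^star_n <= c * alpha_(n / m) for some c > 0 and m >= 1: this set is a
   Calkin space containing alpha, and it lies in every Calkin space containing
   alpha, because the m-fold dilation of alpha is a sum of m sequences each of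
   which rearranges to alpha.  Stability then reduces to closedness of this set
   under the tensor product (alpha itself is dominated by
   alpha (x) alpha / alpha_1).  If |b_i g_j| > c1 c2 w^N, then |b_i| > c1 w^N
   and |g_j| > c2 w^N, so there are at most m1 m2 S_N^2 such pairs, where
   S_N = K_0 + ... + K_(N-1) counts the alpha_k > w^N.  The growth hypothesis
   gives S_N^2 <= S_(N+1) / C, which is domination of b (x) g with constant
   c1 c2 / w^2 and dilation m1 m2 (1 + 1/C). *)

From HB Require Import structures.
From mathcomp Require Import all_boot all_order all_algebra.
From mathcomp Require Import all_classical all_reals.
From mathcomp Require Import topology normedtype sequences.
From mathcomp Require Import complex finmap.
From mathcomp Require Import zify lra.
Import Order.TTheory GRing.Theory Num.Theory numFieldNormedType.Exports.
Local Open Scope classical_set_scope.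
Local Open Scope ring_scope.
Set Implicit Arguments.
Unset Strict Implicit.
Unset Printing Implicit Defensive.
Arguments modc : simpl never.

Section Modulus.
Variable R : realType.

Lemma modc_ge0 (z : R[i]) : 0 <= modc z.
Proof. by case: z => x y; rewrite /modc /= sqrtr_ge0. Qed.

Lemma modcR (x : R) : modc (x%:C)%C = `|x|.
Proof. by rewrite /modc /= expr0n /= addr0 sqrtr_sqr. Qed.

Lemma modcD (z u : R[i]) : modc (z + u) <= modc z + modc u.
Proof. exact: le_normcD. Qed.

Lemma modcM (z u : R[i]) : modc (z * u) = modc z * modc u.
Proof. exact: Normc.normcM. Qed.

Lemma modc0 : modc (0 : R[i]) = 0.
Proof. exact: Normc.normc0. Qed.

Lemma c0P (b : nat -> R[i]) :
  c0 b <-> forall e, 0 < e -> exists N, forall n, (N <= n)%N -> modc (b n) <= e.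
Proof.
have dist0 n : `|0 - modc (b n)| = modc (b n).
  by rewrite sub0r normrN ger0_norm ?modc_ge0.
split=> [/cvgrPdist_le cvgb e e0|bP].
  by have [N _ HN] := cvgb e e0; exists N => n Nn; rewrite -dist0 HN.
apply/cvgrPdist_le => e e0; have [N HN] := bP e e0.
by exists N => // n Nn; rewrite dist0 HN.
Qed.

Definition ubounded (I : Type) (f : I -> R) := exists M, forall i, f i <= M.

Lemma c0_ubounded (b : nat -> R[i]) : c0 b -> ubounded (fun k => modc (b k)).
Proof.
move=> /c0P /(_ 1 ltr01) [N HN].
have sum_ge0 : 0 <= \sum_(k < N) modc (b k) by apply: sumr_ge0 => k _; apply: modc_ge0.
exists (1 + \sum_(k < N) modc (b k)) => k; have [kN|Nk] := ltnP k N.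
  apply: le_trans (ler_wpDl ler01 (lexx _)).
  rewrite (bigD1 (Ordinal kN)) //= ler_wpDr //.
  by apply: sumr_ge0 => i _; apply: modc_ge0.
by apply: le_trans (HN _ Nk) _; rewrite lerDl.
Qed.

End Modulus.

Section Rearrangement.
Variables (R : realType) (I : eqType).

(* [n.+1] indices, because [rearr f n] is the (n+1)-st largest value of [f];
   see [rearr_gtP]. *)
Definition exceeds (f : I -> R) (t : R) (n : nat) :=
  exists s : seq I, [/\ uniq s, (n < size s)%N & all (fun i => t < f i) s].

Lemma all_gt_min (f : I -> R) t (s : seq I) :
  all (fun i => t < f i) s -> exists t', t < t' /\ forall i, i \in s -> t' <= f i.
Proof.
elim: s => [|x s IH] /=; first by exists (t + 1); split; rewrite ?ltrDl.
move=> /andP[tx /IH [t' [tt' t'le]]]; exists (Num.min t' (f x)); split.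
  by rewrite lt_min tt' tx.
move=> i; rewrite in_cons => /orP[/eqP->|/t'le h]; first by rewrite ge_min lexx orbT.
by rewrite ge_min h.
Qed.

Lemma not_many_cover (P : pred I) n :
  ~ (exists s : seq I, [/\ uniq s, (n < size s)%N & all P s]) ->
  exists s : seq I, [/\ uniq s, (size s <= n)%N & forall i, P i -> i \in s].
Proof.
move=> few.
suff grow d (s0 : seq I) : uniq s0 -> all P s0 -> (n < size s0 + d)%N ->
    exists s : seq I, [/\ uniq s, (size s <= n)%N & forall i, P i -> i \in s].
  exact: (grow n.+1 [::]).
elim: d s0 => [|d IH] s0 u0 a0 sz; first by case: few; exists s0; rewrite -[size s0]addn0.
have [cover|] := pselect (forall i, P i -> i \in s0).
  by exists s0; split; rewrite // leqNgt; apply/negP => ns; apply: few; exists s0.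
move=> /existsNP [i /not_implyP [Pi ni]].
apply: (IH (i :: s0)); rewrite /= ?u0 ?a0 ?Pi ?addSnnS //.
by rewrite andbT; apply/negP.
Qed.

Variable f : I -> R.
Hypotheses (f_ge0 : forall i, 0 <= f i) (f_ub : ubounded f).

Let tail_sup (s : seq I) := sup [set f i | i in [set i | i \notin s]].

Let tail_ub (s : seq I) : has_ubound [set f i | i in [set i | i \notin s]].
Proof. by have [M fM] := f_ub; exists M => _ [i _ <-]. Qed.

Let le_tail_sup s i : i \notin s -> f i <= tail_sup s.
Proof. by move=> ni; apply: ub_le_sup (tail_ub s) _ _; exists i. Qed.

Let tail_sup_empty s : ~ (exists i, i \notin s) -> tail_sup s = 0.
Proof.
move=> none; rewrite /tail_sup.
suff -> : [set f i | i in [set i | i \notin s]] = set0 by rewrite sup0.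
by apply/seteqP; split => // _ [i /= ni _]; apply: none; exists i.
Qed.

Let tail_sup_le s t :
  0 <= t -> (forall i, i \notin s -> f i <= t) -> tail_sup s <= t.
Proof.
move=> t0 ft; have [[i ni]|none] := pselect (exists i, i \notin s).
  by apply: ge_sup => [|_ [j /= nj <-]]; [exists (f i), i|apply: ft].
by rewrite tail_sup_empty.
Qed.

Let tail_sup_ge0 s : 0 <= tail_sup s.
Proof.
have [[i ni]|none] := pselect (exists i, i \notin s).
  exact: le_trans (f_ge0 i) (le_tail_sup ni).
by rewrite tail_sup_empty.
Qed.

Let tails_lb n : has_lbound [set tail_sup s | s in [set s : seq I | (size s <= n)%N]].
Proof. by exists 0 => _ [s _ <-]. Qed.

Lemma rearr_ge0 n : 0 <= rearr f n.
Proof.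
apply: lb_le_inf => [|_ [s _ <-]]; last exact: tail_sup_ge0.
by exists (tail_sup [::]), [::].
Qed.

Lemma rearr_gtP t n : 0 <= t -> (t < rearr f n <-> exceeds f t n).
Proof.
move=> t0; split=> [tlt|[s0 [u0 sz0 a0]]].
  apply: contrapT => few.
  have [s [us sn cover]] := not_many_cover (P := fun i => t < f i) few.
  suff : rearr f n <= t by rewrite leNgt tlt.
  apply: le_trans (ge_inf (tails_lb n) _) _; first by exists s.
  by apply: tail_sup_le => // i ni; rewrite leNgt; apply: contra ni => /cover.
have [t' [tt' t'le]] := all_gt_min a0.
apply: lt_le_trans tt' _; apply: lb_le_inf => [|_ [s /= ss <-]].
  by exists (tail_sup [::]), [::].
have [i is0 nis] : exists2 i, i \in s0 & i \notin s.
  apply: contrapT => sub; have /uniq_leq_size : {subset s0 <= s}.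
    by move=> i is0; apply: contrapT => nis; apply: sub; exists i => //; apply/negP.
  by move=> /(_ u0); move: ss sz0; clear; lia.
exact: le_trans (t'le _ is0) (le_tail_sup nis).
Qed.

Lemma rearr_nonincr m n : (n <= m)%N -> rearr f m <= rearr f n.
Proof.
move=> nm; rewrite leNgt; apply/negP => lt.
pose t := (rearr f m + rearr f n) / 2.
have t0 : 0 <= t by rewrite /t divr_ge0 // addr_ge0 // rearr_ge0.
have tm : t < rearr f m by rewrite /t; lra.
have [s [us ss al]] := (rearr_gtP m t0).1 tm.
suff : t < rearr f n by rewrite /t; lra.
by apply/(rearr_gtP n t0); exists s; split => //; apply: leq_ltn_trans nm ss.
Qed.

End Rearrangement.

Lemma rearr_le_exceeds (R : realType) (I : eqType) (f g : I -> R) n :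
  (forall i, 0 <= f i) -> ubounded f -> (forall i, 0 <= g i) -> ubounded g ->
  (forall t, 0 < t -> exceeds f t n -> exceeds g t n) -> rearr f n <= rearr g n.
Proof.
move=> f0 fub g0 gub fg; rewrite leNgt; apply/negP => lt.
pose t := (rearr f n + rearr g n) / 2.
have gn0 := rearr_ge0 g0 gub n.
have t0 : 0 < t by rewrite /t; lra.
have /(fg _ t0) : exceeds f t n by apply/(rearr_gtP f0 fub n (ltW t0)); rewrite /t; lra.
by move=> /(rearr_gtP g0 gub n (ltW t0)); rewrite /t; lra.
Qed.

Lemma star_le_exceeds (R : realType) (b g : nat -> R[i]) n : c0 b -> c0 g ->
  (forall t, 0 < t ->
     exceeds (fun k => modc (b k)) t n -> exceeds (fun k => modc (g k)) t n) ->
  star b n <= star g n.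
Proof.
move=> b_c0 g_c0.
exact: rearr_le_exceeds (fun i => modc_ge0 _) (c0_ubounded b_c0)
  (fun i => modc_ge0 _) (c0_ubounded g_c0).
Qed.

Lemma uniq_has_ge (s : seq nat) n :
  uniq s -> (n < size s)%N -> exists2 i, i \in s & (n <= i)%N.
Proof.
move=> us sz; apply: contrapT => small.
have /(uniq_leq_size us) : {subset s <= iota 0 n}.
  move=> i iS; rewrite mem_iota add0n ltnNge; apply/negP => ni; apply: small.
  by exists i.
by rewrite size_iota leqNgt sz.
Qed.

Lemma exceeds_iota (R : realType) (f : nat -> R) t n :
  (forall k, (k <= n)%N -> t < f k) -> exceeds f t n.
Proof.
move=> ft; exists (iota 0 n.+1); rewrite iota_uniq size_iota; split => //.
by apply/allP => k; rewrite mem_iota add0n ltnS => /ft.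
Qed.

Section Tensor.
Variables (R : realType) (b g : nat -> R[i]).
Hypotheses (b_c0 : c0 b) (g_c0 : c0 g).

Definition tensor_entries (p : nat * nat) : R := modc (b p.1 * g p.2).

Lemma tensor_entries_ge0 p : 0 <= tensor_entries p.
Proof. exact: modc_ge0. Qed.

Lemma tensor_entries_ub : ubounded tensor_entries.
Proof.
have [Mb bM] := c0_ubounded b_c0; have [Mg gM] := c0_ubounded g_c0.
by exists (Mb * Mg) => p; rewrite /tensor_entries modcM ler_pM ?modc_ge0.
Qed.

Lemma modc_tensor n : modc (tensor b g n) = rearr tensor_entries n.
Proof.
by rewrite /tensor modcR ger0_norm // (rearr_ge0 tensor_entries_ge0 tensor_entries_ub).
Qed.

Lemma exceeds_tensor t n : 0 <= t ->
  exceeds (fun k => modc (tensor b g k)) t n <-> exceeds tensor_entries t n.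
Proof.
move=> t0; have gtP := rearr_gtP tensor_entries_ge0 tensor_entries_ub.
have anti := rearr_nonincr tensor_entries_ge0 tensor_entries_ub.
split=> [[s [us sz /allP al]]|/(gtP t n t0) tn].
  have [i iS ni] := uniq_has_ge us sz.
  apply/(gtP t n t0); apply: lt_le_trans (al i iS) _.
  by rewrite modc_tensor; exact: anti ni.
apply: exceeds_iota => k kn; rewrite modc_tensor; apply: lt_le_trans tn _.
exact: anti.
Qed.

Lemma star_le_tensor k n : modc (g k) = 1 -> star b n <= star (tensor b g) n.
Proof.
move=> gk; have anti := rearr_nonincr tensor_entries_ge0 tensor_entries_ub.
apply: rearr_le_exceeds (fun i => modc_ge0 _) (c0_ubounded b_c0) (fun i => modc_ge0 _) _ _.
  by exists (rearr tensor_entries 0) => i; rewrite modc_tensor anti.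
move=> t t0 [s [us sz /allP al]]; apply/exceeds_tensor; rewrite ?ltW //.
exists (map (fun i => (i, k)) s); rewrite size_map map_inj_uniq => [|i j [] //].
split => //; apply/allP => _ /mapP [i iS ->].
by rewrite /tensor_entries /= modcM gk mulr1 al.
Qed.

End Tensor.

Section CalkinHull.
Variable R : realType.
Implicit Types S J : set (nat -> R[i]).

Lemma calkin_gen_calkin S J : calkin J -> S `<=` J -> calkin (calkin_gen S).
Proof.
move=> cJ SJ; split.
- by move=> b /(_ J cJ SJ); case: cJ => + _ _ _ _; apply.
- by move=> J' [_ + _ _ _].
- by move=> b g Sb Sg J' cJ' SJ'; case: (cJ') => _ _ + _ _; apply; [apply: Sb|apply: Sg].
- by move=> c b Sb J' cJ' SJ'; case: (cJ') => _ _ _ + _; apply; apply: Sb.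
- by move=> g b Sg b0 le J' cJ' SJ'; case: (cJ') => _ _ _ _; apply; [apply: Sg| |].
Qed.

Lemma calkin_gen_least S J : calkin J -> S `<=` J -> calkin_gen S `<=` J.
Proof. by move=> cJ SJ b; apply. Qed.

Lemma sub_calkin_gen S : S `<=` calkin_gen S.
Proof. by move=> b Sb J _; apply. Qed.

End CalkinHull.

Lemma leq_divn_pred m k q : (0 < m)%N -> (q * m < k)%N -> (q <= k.-1 %/ m)%N.
Proof. by move=> m0 qk; rewrite leq_divRL //; lia. Qed.

Section CalkinSpan.
Variables (R : realType) (a : nat -> R).
Hypotheses (a_ge0 : forall n, 0 <= a n)
  (a_nonincr : forall m n, (m <= n)%N -> a n <= a m)
  (a_cvg0 : a @ \oo --> (0 : R)).

Let alpha n : R[i] := ((a n)%:C)%C.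

Lemma modc_alpha n : modc (alpha n) = a n.
Proof. by rewrite modcR ger0_norm. Qed.

Lemma alpha_c0 : c0 alpha.
Proof. by rewrite /c0 (_ : (fun n => _) = a) //; apply: funext => n; rewrite modc_alpha. Qed.

Lemma a_threshold x : 0 < x -> exists S, forall j, (x < a j) = (j < S)%N.
Proof.
move=> x0; have x2 : 0 < x / 2 by lra.
have [N aN] := (c0P alpha).1 alpha_c0 _ x2.
have small : exists j, a j <= x by exists N; move: (aN N (leqnn N)); rewrite modc_alpha; lra.
exists (ex_minn small) => j; case: ex_minnP => S aS Smin; apply/idP/idP => [xj|jS].
  by rewrite ltnNge; apply/negP => /a_nonincr; lra.
by rewrite ltNge; apply/negP => /Smin; rewrite leqNgt jS.
Qed.

(* [dominated c m b] is [b^\star_n <= c * alpha_(n %/ m)] for all [n], read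
   through [rearr_gtP]. *)
Definition dominated (c : R) (m : nat) (b : nat -> R[i]) :=
  forall t n, 0 < t -> exceeds (fun k => modc (b k)) (c * t) n -> t < a (n %/ m).

Definition dominated_set : set (nat -> R[i]) :=
  [set b | c0 b /\ exists c m, [/\ 0 < c, (0 < m)%N & dominated c m b]].

Lemma dominated_set0 : dominated_set (fun _ => 0).
Proof.
split; first by apply/c0P => e e0; exists 0%N => n _; rewrite modc0 ltW.
exists 1, 1%N; split => // t n t0 [[|i s] [_ //]] _ /= /andP[].
by rewrite modc0 mul1r ltNge ltW.
Qed.

Lemma dominated_setD b g :
  dominated_set b -> dominated_set g -> dominated_set (fun n => b n + g n).
Proof.
move=> [b_c0 [c1 [m1 [c1_gt0 m1_gt0 b_dom]]]] [g_c0 [c2 [m2 [c2_gt0 m2_gt0 g_dom]]]].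
split.
  apply/c0P => e e0; have e2 : 0 < e / 2 by rewrite divr_gt0.
  have [N1 bN1] := (c0P b).1 b_c0 _ e2; have [N2 gN2] := (c0P g).1 g_c0 _ e2.
  exists (maxn N1 N2) => n; rewrite geq_max => /andP[n1 n2].
  by apply: le_trans (modcD _ _) _; rewrite (splitr e) lerD ?bN1 ?gN2.
exists (c1 + c2), (m1 + m2)%N; split; [exact: addr_gt0|by rewrite addn_gt0 m1_gt0|].
move=> t n t0 [s [us sz /allP al]].
pose p i := c1 * t < modc (b i).
pose s1 := seq.filter p s; pose s2 := seq.filter (predC p) s.
have ss : size s = (size s1 + size s2)%N by rewrite !size_filter count_predC.
pose q := (n %/ (m1 + m2))%N.
have qn : (q * (m1 + m2) <= n)%N by apply: leq_divM.
have [big1|small1] := ltnP (q * m1) (size s1).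
  have : t < a ((size s1).-1 %/ m1).
    apply: b_dom => //; exists s1; rewrite filter_uniq ?filter_all //.
    by rewrite prednK //; apply: leq_ltn_trans big1.
  by move/lt_le_trans; apply; apply/a_nonincr/leq_divn_pred.
have big2 : (q * m2 < size s2)%N by move: qn sz small1; rewrite ss mulnDr; lia.
have : t < a ((size s2).-1 %/ m2).
  apply: g_dom => //; exists s2; rewrite filter_uniq //; split => //.
    by rewrite prednK //; apply: leq_ltn_trans big2.
  apply/allP => i; rewrite mem_filter /p /= -leNgt => /andP[bi iS].
  have := al i iS; rewrite /= mulrDl ltNge; apply: contraNT; rewrite -leNgt => gi.
  exact: le_trans (modcD _ _) (lerD bi gi).
by move/lt_le_trans; apply; apply/a_nonincr/leq_divn_pred.
Qed.

Lemma dominated_setZ (c : R[i]) b : dominated_set b -> dominated_set (fun n => c * b n).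
Proof.
move=> [b_c0 [c1 [m1 [c1_gt0 m1_gt0 b_dom]]]].
pose k := modc c + 1.
have k_gt0 : 0 < k by rewrite ltr_pwDr // modc_ge0.
have ck : modc c <= k by rewrite lerDl.
split.
  apply/c0P => e e0; have [N bN] := (c0P b).1 b_c0 _ (divr_gt0 e0 k_gt0).
  exists N => n Nn; rewrite modcM; apply: le_trans (_ : k * modc (b n) <= e).
    by rewrite ler_wpM2r ?modc_ge0.
  by rewrite -ler_pdivlMl // mulrC bN.
exists (k * c1), m1; split; rewrite ?mulr_gt0 // => t n t0 [s [us sz /allP al]].
apply: b_dom => //; exists s; split => //; apply/allP => i iS.
have := al i iS; rewrite /= modcM ltNge; apply: contraNT; rewrite -leNgt => bi.
have ct : 0 <= c1 * t by rewrite mulr_ge0 // ltW.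
by rewrite -mulrA; apply: le_trans (ler_wpM2l (modc_ge0 c) bi) (ler_wpM2r ct ck).
Qed.

Lemma dominated_set_hered g b : dominated_set g -> c0 b ->
  (forall n, star b n <= star g n) -> dominated_set b.
Proof.
move=> [g_c0 [c [m [c_gt0 m_gt0 g_dom]]]] b_c0 le_star; split => //.
exists c, m; split => // t n t0 bn; apply: g_dom => //.
have ct : 0 <= c * t by rewrite mulr_ge0 // ltW.
apply/(rearr_gtP (fun i => modc_ge0 (g i)) (c0_ubounded g_c0) n ct).
apply: lt_le_trans (le_star n).
exact/(rearr_gtP (fun i => modc_ge0 (b i)) (c0_ubounded b_c0) n ct).
Qed.

Lemma dominated_set_calkin : calkin dominated_set.
Proof.
split; [by move=> b []|exact: dominated_set0|exact: dominated_setD|exact: dominated_setZ|].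
exact: dominated_set_hered.
Qed.

Lemma alpha_dominated : dominated_set alpha.
Proof.
split; first exact: alpha_c0.
exists 1, 1%N; split => // t n t0 [s [us sz /allP al]].
have [i iS ni] := uniq_has_ge us sz.
have := al i iS; rewrite /= mul1r modc_alpha divn1 => /lt_le_trans; apply.
exact: a_nonincr.
Qed.

Section Dilation.
Variables (J : set (nat -> R[i])) (m : nat).
Hypotheses (J_calkin : calkin J) (J_alpha : J alpha) (m_gt0 : (0 < m)%N).

Let residue_part (r : nat) i : R[i] := if (i %% m == r)%N then alpha (i %/ m) else 0.

Let residue_part_in r : J (residue_part r).
Proof.
have [J_c0 _ _ _ J_hered] := J_calkin.
have part_c0 : c0 (residue_part r).
  apply/c0P => e e0; have [N aN] := (c0P alpha).1 alpha_c0 _ e0.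
  exists (N * m)%N => i Ni; rewrite /residue_part; case: ifP => _.
    by apply: aN; rewrite leq_divRL.
  by rewrite modc0 ltW.
apply: (J_hered alpha) => // n; apply: star_le_exceeds alpha_c0 _ => //.
move=> t t0 [s [us sz /allP al]].
have res i : i \in s -> (i %% m = r)%N.
  move=> iS; have := al i iS; rewrite /residue_part /=.
  by case: eqP => // _; rewrite modc0 ltNge ltW.
exists (map (fun i => i %/ m)%N s); rewrite size_map; split => //.
  rewrite map_inj_in_uniq // => i j iS jS eqij.
  by rewrite (divn_eq i m) (divn_eq j m) eqij (res i iS) (res j jS).
apply/allP => _ /mapP [i iS ->]; have := al i iS.
by rewrite /residue_part (res i iS) eqxx.
Qed.

Lemma dilate_alpha_in : J (fun i => alpha (i %/ m)).
Proof.
have [_ J0 JD _ _] := J_calkin.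
have partial_sums k : J (fun i => \sum_(r < k) residue_part r i).
  elim: k => [|k IH].
    by rewrite (_ : (fun i => _) = fun _ => 0) //; apply: funext => i; rewrite big_ord0.
  rewrite (_ : (fun i => _) = fun i => \sum_(r < k) residue_part r i + residue_part k i).
    exact: JD.
  by apply: funext => i; rewrite big_ord_recr.
rewrite (_ : (fun i => _) = fun i => \sum_(r < m) residue_part r i) //.
apply: funext => i; rewrite (bigD1 (Ordinal (ltn_pmod i m_gt0))) //=.
rewrite /residue_part eqxx big1 ?addr0 // => r /eqP neq.
by case: eqP => // eqr; case: neq; apply: val_inj; rewrite /= eqr.
Qed.

End Dilation.

Lemma dominated_set_least J : calkin J -> J alpha -> dominated_set `<=` J.
Proof.
move=> J_calkin J_alpha b [b_c0 [c [m [c_gt0 m_gt0 b_dom]]]].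
have [J_c0 _ _ JZ J_hered] := J_calkin.
pose G i := (c%:C)%C * alpha (i %/ m).
have JG : J G by apply: JZ; exact: dilate_alpha_in.
apply: (J_hered G) => // n; apply: star_le_exceeds (J_c0 _ JG) _ => //.
move=> t t0 bn; have tc : t / c < a (n %/ m).
  by apply: b_dom; rewrite ?divr_gt0 // mulrC divfK ?gt_eqF.
apply: exceeds_iota => i ni.
rewrite /G modcM modc_alpha modcR ger0_norm ?ltW // -ltr_pdivrMl // mulrC.
by apply: lt_le_trans tc _; apply/a_nonincr/leq_div2r.
Qed.

Lemma calkin_spanE : calkin_span alpha = dominated_set.
Proof.
apply/seteqP; split.
  by apply: calkin_gen_least dominated_set_calkin _ => _ ->; exact: alpha_dominated.
by move=> b b_dom J J_calkin /(_ _ erefl) /dominated_set_least; apply.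
Qed.

Lemma dominated_modc_le c m b x :
  0 < x -> a 0%N <= x -> dominated c m b -> forall i, modc (b i) <= c * x.
Proof.
move=> x0 a0x b_dom i; rewrite leNgt; apply/negP => bi.
suff : x < a (0 %/ m) by rewrite div0n ltNge a0x.
by apply: b_dom => //; exists [:: i]; rewrite /= bi.
Qed.

Lemma dominated_c0 c m b : 0 < c -> (0 < m)%N -> dominated c m b ->
  {homo (fun k => modc (b k)) : i j / (i <= j)%N >-> j <= i} -> c0 b.
Proof.
move=> c_gt0 m_gt0 b_dom b_nonincr; apply/c0P => e e0.
have ec : 0 < e / c by rewrite divr_gt0.
have [N aN] := (c0P alpha).1 alpha_c0 _ ec.
exists (N * m)%N => n Nn; rewrite leNgt; apply/negP => bn.
have : e / c < a (n %/ m).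
  apply: b_dom => //; apply: exceeds_iota => k kn.
  by rewrite mulrC divfK ?gt_eqF //; apply: lt_le_trans bn (b_nonincr _ _ kn).
by rewrite -modc_alpha ltNge aN // leq_divRL.
Qed.

End CalkinSpan.

Lemma expr_lt_exists (R : realType) (w t : R) :
  0 <= w -> w < 1 -> 0 < t -> exists k, w ^+ k < t.
Proof.
move=> w0 w1 t0; have w1' : `|w| < 1 by rewrite ger0_norm.
have /cvgrPdist_lt /(_ t t0) [N _ wN] := cvg_expr w1'.
by exists N; move: (wN N (leqnn N)); rewrite /= sub0r normrN ger0_norm // exprn_ge0.
Qed.

Lemma size_pairs_le (T U : eqType) (s : seq (T * U)) :
  uniq s -> (size s <= size (undup (map fst s)) * size (undup (map snd s)))%N.
Proof.
move=> us; rewrite -(size_allpairs pair); apply: uniq_leq_size => // -[i j] pS.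
by apply: allpairs_f; rewrite mem_undup; apply/mapP; exists (i, j).
Qed.

Lemma ltr_of_mul_bounded (R : realFieldType) (x y p q r : R) :
  0 <= x -> y <= q -> 0 <= q -> p * q * r < x * y -> p * r < x.
Proof. by move=> x0 yq q0; apply: contraTT; rewrite -!leNgt; nra. Qed.

Section Stability.
Variables (R : realType) (a : nat -> R) (w C : R).
Hypotheses (a_ge0 : forall n, 0 <= a n)
  (a_nonincr : forall m n, (m <= n)%N -> a n <= a m)
  (a_cvg0 : a @ \oo --> (0 : R)) (a0_le1 : a 0%N <= 1)
  (w_gt0 : 0 < w) (w_lt1 : w < 1) (C_gt0 : 0 < C)
  (Kw_growth : forall (j n : nat), (1 <= j)%N ->
     C * (\sum_(i < n.+1) ((Kw w a i)%:R : R)) ^+ 2 <= (Kw w a (n + j))%:R).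

Let alpha n : R[i] := ((a n)%:C)%C.

Let Ksum N := (\sum_(i < N) Kw w a i)%N.

Lemma Ksum_threshold N j : (w ^+ N < a j) = (j < Ksum N)%N.
Proof.
elim: N j => [|N IH] j.
  by rewrite /Ksum big_ord0 expr0 ltNge (le_trans (a_nonincr (leq0n j)) a0_le1).
have [S' S'E] := a_threshold a_ge0 a_nonincr a_cvg0 (exprn_gt0 N.+1 w_gt0).
have SS' : (Ksum N <= S')%N.
  rewrite leqNgt -IH; apply/negP => wa.
  have : w ^+ N.+1 < a S' by apply: lt_trans wa; rewrite ltr_iXn2l.
  by rewrite S'E ltnn.
rewrite S'E /Ksum big_ord_recr /= /Kw -/(Ksum N).
have -> : [set m | w ^+ N.+1 < a m <= w ^+ N] = `I_S' `\` `I_(Ksum N).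
  apply/seteqP; split => m /=; rewrite S'E leNgt IH.
    by case/andP => -> /negP.
  by case=> -> /negP ->.
by rewrite (card_fset_set card_IID); lia.
Qed.

Lemma Ksum_sqr_le : exists M, forall N, (Ksum N * Ksum N <= M * Ksum N.+1)%N.
Proof.
pose M := Num.Def.archi_bound C^-1.
have CM : C^-1 < M%:R by apply: archi_boundP; rewrite invr_ge0 ltW.
exists M => -[|N]; first by rewrite /Ksum big_ord0.
have := Kw_growth N (leqnn 1); rewrite addn1 -natr_sum -/(Ksum N.+1) => growth.
rewrite -(ler_nat R) !natrM -expr2.
apply: (@le_trans _ _ (C^-1 * (Kw w a N.+1)%:R)); first by rewrite ler_pdivlMl.
apply: ler_pM => //; [by rewrite invr_ge0 ltW|exact: ltW|].
by rewrite ler_nat /Ksum big_ord_recr leq_addl.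
Qed.

Lemma wpow_bracket t : 0 < t -> t <= w -> exists N, w ^+ N.+2 < t <= w ^+ N.+1.
Proof.
move=> t0 tw; have ex : exists k, w ^+ k < t by apply: expr_lt_exists; rewrite ?ltW.
case: (ex_minnP ex) => -[|[|k]] wk kmin.
- by move: (lt_le_trans wk tw); rewrite expr0 ltNge ltW.
- by move: (lt_le_trans wk tw); rewrite expr1 ltxx.
by exists k; rewrite wk leNgt; apply/negP => /kmin; rewrite ltnn.
Qed.

Lemma dominated_count c m b N (X : seq nat) : (0 < m)%N -> dominated a c m b ->
  uniq X -> all (fun i => c * w ^+ N < modc (b i)) X -> (size X <= Ksum N * m)%N.
Proof.
move=> m_gt0 b_dom uX aX; case sX: (size X) => [//|k].
have : w ^+ N < a (k %/ m) by apply: b_dom; rewrite ?exprn_gt0 //; exists X; rewrite sX.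
by rewrite Ksum_threshold ltn_divLR.
Qed.

Section TensorDomination.
Variables (b g : nat -> R[i]) (c1 c2 : R) (m1 m2 : nat).
Hypotheses (c1_gt0 : 0 < c1) (c2_gt0 : 0 < c2) (m1_gt0 : (0 < m1)%N) (m2_gt0 : (0 < m2)%N)
  (b_dom : dominated a c1 m1 b) (g_dom : dominated a c2 m2 g).

Let b_le i : modc (b i) <= c1.
Proof. by rewrite -[c1]mulr1; apply: dominated_modc_le b_dom _. Qed.

Let g_le j : modc (g j) <= c2.
Proof. by rewrite -[c2]mulr1; apply: dominated_modc_le g_dom _. Qed.

Let c := c1 * c2 / w ^+ 2.

Let c_gt0 : 0 < c.
Proof. by rewrite divr_gt0 ?mulr_gt0 ?exprn_gt0. Qed.

Let c_w2 : c * w ^+ 2 = c1 * c2.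
Proof. by rewrite divfK // expf_neq0 // gt_eqF. Qed.

Lemma tensor_entries_dominated : exists (c : R) (M : nat), [/\ 0 < c, (0 < M)%N &
  forall t n, 0 < t -> exceeds (tensor_entries b g) (c * t) n -> t < a (n %/ M)].
Proof.
have [M KM] := Ksum_sqr_le.
exists c, (m1 * m2 * M.+1)%N; split => //; first by rewrite !muln_gt0 m1_gt0 m2_gt0.
move=> t n t0 [s [us sz /allP al]].
have entry_le p : modc (b p.1 * g p.2) <= c1 * c2 by rewrite modcM ler_pM ?modc_ge0.
have [tw|wt] := leP t w; last first.
  case: s sz us al => // p s _ _ /(_ p (mem_head _ _)); apply: contraTT => _.
  rewrite -leNgt; apply: le_trans (entry_le p) _; rewrite -c_w2 ler_pM2l //.
  apply/ltW; apply: le_lt_trans wt.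
  by rewrite expr2 ger_pMr // ltW.
have [N /andP[wNt tN]] := wpow_bracket t0 tw.
have low p : p \in s -> c1 * c2 * w ^+ N < modc (b p.1) * modc (g p.2).
  move=> pS; rewrite -modcM; apply: le_lt_trans (al p pS).
  by rewrite -c_w2 -mulrA -exprD add2n ler_pM2l // ltW.
pose X := undup (map fst s); pose Y := undup (map snd s).
have sX : (size X <= Ksum N * m1)%N.
  apply: dominated_count b_dom _ _ => //; first exact: undup_uniq.
  apply/allP => i; rewrite mem_undup => /mapP [p pS ->].
  by apply: ltr_of_mul_bounded (low p pS); rewrite ?modc_ge0 ?g_le ?ltW.
have sY : (size Y <= Ksum N * m2)%N.
  apply: dominated_count g_dom _ _ => //; first exact: undup_uniq.
  apply/allP => j; rewrite mem_undup => /mapP [p pS ->].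
  apply: (@ltr_of_mul_bounded _ _ (modc (b p.1)) c2 c1); rewrite ?modc_ge0 ?b_le ?ltW //.
  by rewrite [c2 * c1]mulrC [modc (g _) * _]mulrC; exact: low.
have nK : (n < Ksum N.+1 * (m1 * m2 * M.+1))%N.
  apply: (leq_trans sz); apply: (leq_trans (size_pairs_le us)).
  apply: (leq_trans (leq_mul sX sY)).
  have KM' : (Ksum N * Ksum N <= M.+1 * Ksum N.+1)%N.
    by rewrite (leq_trans (KM N)) // leq_mul2r leqnSn orbT.
  rewrite mulnACA (mulnC (Ksum N * _)%N) [X in (_ <= X)%N]mulnC.
  by rewrite -[X in (_ <= X)%N]mulnA leq_mul2l KM' orbT.
move: nK; rewrite -ltn_divLR ?muln_gt0 ?m1_gt0 ?m2_gt0 // -Ksum_threshold.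
exact: le_lt_trans.
Qed.

End TensorDomination.

Lemma dominated_set_tensor b g :
  dominated_set a b -> dominated_set a g -> dominated_set a (tensor b g).
Proof.
move=> [b_c0 [c1 [m1 [c1_gt0 m1_gt0 b_dom]]]] [g_c0 [c2 [m2 [c2_gt0 m2_gt0 g_dom]]]].
have [c [M [c_gt0 M_gt0 entries_dom]]] :=
  tensor_entries_dominated c1_gt0 c2_gt0 m1_gt0 m2_gt0 b_dom g_dom.
have tensor_dom : dominated a c M (tensor b g).
  move=> t n t0 /exceeds_tensor tn; apply: entries_dom => //.
  by apply: tn => //; rewrite mulr_ge0 ?ltW.
split; last by exists c, M.
apply: (dominated_c0 a_ge0 a_cvg0 c_gt0 M_gt0 tensor_dom) => i j ij.
rewrite !modc_tensor //.
exact: rearr_nonincr (tensor_entries_ge0 b g) (tensor_entries_ub b_c0 g_c0) _ _ ij.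
Qed.

Lemma alpha_in_tensor_hull (J : set (nat -> R[i])) :
  calkin J -> (forall b g, dominated_set a b -> dominated_set a g -> J (tensor b g)) ->
  J alpha.
Proof.
move=> [J_c0 J0 _ _ J_hered] J_tensor.
have [a00|a0_neq0] := eqVneq (a 0%N) 0.
  rewrite (_ : alpha = fun _ => 0) //; apply: funext => n; rewrite /alpha.
  by have -> : a n = 0 by apply/eqP; rewrite eq_le a_ge0 -a00 a_nonincr.
have a0_gt0 : 0 < a 0%N by rewrite lt_neqAle eq_sym a0_neq0 a_ge0.
pose g n := (((a 0%N)^-1)%:C)%C * alpha n.
have alpha_dom := alpha_dominated a_ge0 a_nonincr a_cvg0.
have g_dom : dominated_set a g by exact: dominated_setZ.
have J_alpha_g := J_tensor _ _ alpha_dom g_dom.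
apply: (J_hered _ _ J_alpha_g (alpha_c0 a_ge0 a_cvg0)) => n.
apply: (star_le_tensor (alpha_c0 a_ge0 a_cvg0) g_dom.1 (k := 0%N)).
by rewrite modcM modcR modc_alpha // ger0_norm ?invr_ge0 ?ltW // mulVf ?gt_eqF.
Qed.

Lemma calkin_span_stable : stable (calkin_span alpha).
Proof.
have spanE := calkin_spanE a_ge0 a_nonincr a_cvg0.
have dom_calkin := dominated_set_calkin a_nonincr.
rewrite /stable spanE; set T := [set t | _].
have TD : T `<=` dominated_set a by move=> _ [b [g [Db Dg ->]]]; exact: dominated_set_tensor.
have T_calkin := calkin_gen_calkin dom_calkin TD.
apply/seteqP; split; first exact: calkin_gen_least.
apply: dominated_set_least => //; apply: alpha_in_tensor_hull => // b g Db Dg.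
by apply: sub_calkin_gen; exists b, g.
Qed.

End Stability.

Theorem corollary2p9 (R : realType) (a : nat -> R) (w C : R) :
  (forall n, 0 <= a n) ->
  (forall m n, (m <= n)%N -> a n <= a m) ->
  a @ \oo --> (0 : R) ->
  a 0%N <= 1 ->
  0 < w -> w < 1 ->
  0 < C ->
  (forall (j n : nat), (1 <= j)%N ->
     C * (\sum_(i < n.+1) ((Kw w a i)%:R : R)) ^+ 2 <= (Kw w a (n + j))%:R) ->
  calkin (calkin_span (fun n => ((a n)%:C)%C)) /\
  stable (calkin_span (fun n => ((a n)%:C)%C)).
Proof.
move=> a_ge0 a_nonincr a_cvg0 a0_le1 w_gt0 w_lt1 C_gt0 Kw_growth; split.
  by rewrite calkin_spanE //; exact: dominated_set_calkin.
exact: calkin_span_stable Kw_growth.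
Qed.
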